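(* Let $E$ be a finite nonempty set, $f:2^E\to\mathbb{N}$ an integral polymatroid rank function, and let $C_e:\mathbb{N}\times\mathbb{N}\to\mathbb{R}_+$, $e\in E$, be regular functions. Let $D\subseteq\mathbb{N}$ be a set of integers with $\mathbb{B}_f(d)\neq\emptyset$ for all $d\in D$. Then for every $\vec t\in\mathbb{N}^E$, every $d\in D$, every optimal solution $\vec x^*(\vec t,d)$ of $P(\vec t,d)$, every $d'\in D$ and every $\vec t'\in\mathbb{N}^E$, there is an optimal solution $\vec x^*(\vec t',d')$ of $P(\vec t',d')$ with $\|\vec x^*(\vec t,d)-\vec x^*(\vec t',d')\|\le 2\|\vec t-\vec t'\|+|d-d'|$.
   Context: $\mathbb{N}=\{0,1,2,\dots\}$. A set function $f:2^E\to\mathbb{N}$ is an integral polymatroid rank function if $f(\emptyset)=0$, $f$ is monotone and submodular. For $\vec x\in\mathbb{N}^E$, $x(U)=\sum_{e\in U}x_e$; $\mathbb{B}_f(d)=\{\vec x\in\mathbb{N}^E: x(U)\le f(U)\ \forall U\subseteq E,\ x(E)=d\}$. $P(\vec t,d)$: minimize $\sum_{e\in E}C_e(x_e;t_e)$ subject to $\vec x\in\mathbb{B}_f(d)$. $\|\cdot\|$ is the $L_1$-norm. For $C:\mathbb{N}\times\mathbb{N}\to\mathbb{R}$, $C^-(x;t)=C(x;t)-C(x-1;t)$ for $x\ge1$; $C$ is regular if $C^-(x;t)\le C^-(x;t+1)$ and $C^-(x;t+1)\le C^-(x+1;t)$ for all $x\ge1$, $t\in\mathbb{N}$. *)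

From mathcomp Require Import all_boot all_order all_algebra.
From mathcomp Require Export reals.
Set Implicit Arguments. Unset Strict Implicit. Unset Printing Implicit Defensive.
Import Order.TTheory GRing.Theory Num.Theory.

Definition xsum (E : finType) (x : {ffun E -> nat}) (U : {set E}) : nat :=
  (\sum_(e in U) x e)%N.

Definition polymatroid_rank (E : finType) (f : {set E} -> nat) : Prop :=
  [/\ f set0 = 0%N,
      (forall A B : {set E}, A \subset B -> f A <= f B)%N &
      (forall A B : {set E}, f (A :|: B) + f (A :&: B) <= f A + f B)%N].

Definition in_base (E : finType) (f : {set E} -> nat) (d : nat)
    (x : {ffun E -> nat}) : Prop :=
  (forall U : {set E}, xsum x U <= f U)%N /\ xsum x setT = d.

(* C^-(x;t) = C(x;t) - C(x-1;t), x >= 1 *)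
Definition Cminus (R : pzRingType) (C : nat -> nat -> R) (x t : nat) : R :=
  (C x t - C x.-1 t)%R.

Definition regular (R : numDomainType) (C : nat -> nat -> R) : Prop :=
  forall x t : nat, (0 < x)%N ->
    (Cminus C x t <= Cminus C x t.+1)%R /\ (Cminus C x t.+1 <= Cminus C x.+1 t)%R.

Definition total_cost (R : pzRingType) (E : finType) (C : E -> nat -> nat -> R)
    (t x : {ffun E -> nat}) : R :=
  (\sum_(e : E) C e (x e) (t e))%R.

Definition optimal (R : numDomainType) (E : finType) (f : {set E} -> nat)
    (C : E -> nat -> nat -> R) (t : {ffun E -> nat}) (d : nat)
    (x : {ffun E -> nat}) : Prop :=
  in_base f d x /\
  forall y : {ffun E -> nat}, in_base f d y -> (total_cost C t x <= total_cost C t y)%R.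

Definition l1dist (E : finType) (x y : {ffun E -> nat}) : nat :=
  (\sum_(e : E) `|x e - y e|)%N.

From mathcomp Require Import all_boot all_order all_algebra.
Import Order.TTheory GRing.Theory Num.Theory.
From mathcomp Require Import zify lra.
Set Implicit Arguments. Unset Strict Implicit. Unset Printing Implicit Defensive.

(* Let x be optimal for P(t,d), and first let d <= d' and t <= t' componentwise.
   Among the optimal solutions of P(t',d') pick one, y, nearest to x in L1.
   If x_i + t_i > y_i + t'_i for some i, then y_i < x_i, and the exchange
   property of polymatroids yields j with x_j < y_j such that both
   x - chi_i + chi_j and y + chi_i - chi_j stay feasible.  Optimality of x and
   the choice of y (the second move brings y closer to x) give
   C_i^-(x_i;t_i) <= C_j^-(x_j+1;t_j) and C_j^-(y_j;t'_j) < C_i^-(y_i+1;t'_i),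
   and regularity, in the form C^-(a;s) <= C^-(b;u) whenever a <= b and
   a + s <= b + u, makes these incompatible.  Hence x <= y + (t' - t), which
   bounds ||x - y|| by 2||t - t'|| + (d' - d).  The case d' <= d, t' <= t is
   symmetric, and the general case goes down to (min(t,t'), min(d,d')) and
   back up. *)

Section IntegerVectors.
Variable E : finType.
Implicit Types (x y : {ffun E -> nat}) (U V : {set E}).

(* x - chi_i + chi_j, the intended vector only when 0 < x i. *)
Definition transfer x (i j : E) : {ffun E -> nat} :=
  [ffun k => x k + (k == j) - (k == i)]%N.

Lemma transfer_src x i j : i != j -> transfer x i j i = (x i).-1.
Proof. by move=> ij; rewrite ffunE eqxx (negbTE ij) addn0 subn1. Qed.

Lemma transfer_dst x i j : i != j -> transfer x i j j = (x j).+1.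
Proof. by move=> ij; rewrite ffunE eqxx eq_sym (negbTE ij) subn0 addn1. Qed.

Lemma transfer_out x i j k : k != i -> k != j -> transfer x i j k = x k.
Proof. by move=> ki kj; rewrite ffunE (negbTE ki) (negbTE kj) addn0 subn0. Qed.

Lemma sum_eq_mem U i : (\sum_(k in U) (k == i) = (i \in U))%N.
Proof.
case: (boolP (i \in U)) => iU.
  by rewrite (bigD1 i) //= eqxx big1 // => k /andP[_ /negbTE ->].
by rewrite big1 // => k kU; apply/eqP; rewrite eqb0; apply: contraNneq iU => <-.
Qed.

Lemma xsum_transfer x i j U : (0 < x i)%N -> i != j ->
  (xsum (transfer x i j) U + (i \in U) = xsum x U + (j \in U))%N.
Proof.
move=> xi0 ij; rewrite /xsum -!sum_eq_mem -!big_split; apply: eq_bigr => k _.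
rewrite ffunE; case: (k =P i) => [->|ki] /=; first by rewrite (negbTE ij); lia.
by case: (k == j); lia.
Qed.

Lemma xsumUI x U V :
  (xsum x (U :|: V) + xsum x (U :&: V) = xsum x U + xsum x V)%N.
Proof.
rewrite /xsum !(big_mkcond (fun k => k \in _)) -!big_split /=.
apply: eq_bigr => k _; rewrite in_setU in_setI.
by case: (k \in U); case: (k \in V); rewrite /= ?add0n ?addn0.
Qed.

Lemma xsumID x U V : xsum x U = (xsum x (U :&: V) + xsum x (U :\: V))%N.
Proof. exact: big_setID. Qed.

Lemma xsum0 x : xsum x set0 = 0%N.
Proof. exact: big_set0. Qed.

Lemma xsum_ltn x y U i : (forall k, k \in U -> y k <= x k)%N -> i \in U ->
  (y i < x i)%N -> (xsum y U < xsum x U)%N.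
Proof.
move=> yx iU yxi; rewrite /xsum (bigD1 i) //= [X in (_ < X)%N](bigD1 i) //=.
by rewrite -addSn leq_add // leq_sum // => k /andP[kU _]; apply: yx.
Qed.

Lemma xsumT x : xsum x setT = (\sum_k x k)%N.
Proof. by apply: eq_bigl => k; rewrite in_setT. Qed.

Lemma l1distC x y : l1dist x y = l1dist y x.
Proof. by apply: eq_bigr => k _; rewrite distnC. Qed.

Lemma l1dist_triangle x y z : (l1dist x z <= l1dist x y + l1dist y z)%N.
Proof. by rewrite /l1dist -big_split; apply: leq_sum => k _ /=; lia. Qed.

Lemma l1dist_minn x y :
  (l1dist x [ffun k => minn (x k) (y k)] + l1dist [ffun k => minn (x k) (y k)] y
   = l1dist x y)%N.
Proof.
by rewrite /l1dist -big_split; apply: eq_bigr => k _ /=; rewrite !ffunE; lia.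
Qed.

Lemma l1dist_transfer x y i j : (y i < x i)%N -> (x j < y j)%N ->
  (l1dist x (transfer y j i) + 2 = l1dist x y)%N.
Proof.
move=> yxi xyj; have ji : j != i by apply: contraTneq xyj => ->; rewrite -leqNgt ltnW.
rewrite /l1dist (bigD1 i) //= [X in _ = X](bigD1 i) //= (bigD1 j) //=.
rewrite [X in _ = _ + X](bigD1 j) //=.
rewrite transfer_dst // transfer_src //.
under eq_bigr => k /andP[ki kj] do rewrite transfer_out //.
lia.
Qed.

Lemma l1dist_le_shift x y (a b : {ffun E -> nat}) :
  (forall k, x k + a k <= y k + b k)%N ->
  (l1dist x y + xsum x setT <= xsum y setT + 2 * l1dist a b)%N.
Proof.
move=> xy; rewrite !xsumT /l1dist big_distrr -!big_split /=.
by apply: leq_sum => k _; have := xy k; lia.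
Qed.

End IntegerVectors.

Section PolymatroidExchange.
Variables (E : finType) (f : {set E} -> nat).
Hypothesis f0 : f set0 = 0%N.
Hypothesis f_submod : forall U V, (f (U :|: V) + f (U :&: V) <= f U + f V)%N.
Implicit Types (x y : {ffun E -> nat}) (U V : {set E}).

Definition in_polymatroid x := forall U, (xsum x U <= f U)%N.

Definition tight x U := xsum x U == f U.

Lemma tightUI x U V : in_polymatroid x -> tight x U -> tight x V ->
  tight x (U :|: V) /\ tight x (U :&: V).
Proof.
move=> xP /eqP xU /eqP xV; have := xsumUI x U V; have := f_submod U V.
by have := xP (U :|: V); have := xP (U :&: V); rewrite /tight; lia.
Qed.

Definition max_tight_avoiding x i := \bigcup_(U | tight x U && (i \notin U)) U.

Definition min_tight_containing x i := \bigcap_(U | tight x U && (i \in U)) U.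

Lemma max_tight_avoidingP x i : in_polymatroid x ->
  tight x (max_tight_avoiding x i) && (i \notin max_tight_avoiding x i).
Proof.
move=> xP; apply: (big_ind (fun U => tight x U && (i \notin U))) => //.
  by rewrite /tight xsum0 f0 in_set0.
move=> U V /andP[tU iU] /andP[tV iV].
by have [-> _] := tightUI xP tU tV; rewrite in_setU negb_or iU iV.
Qed.

Lemma min_tight_containingP x i : in_polymatroid x ->
  let B := min_tight_containing x i in (i \in B) && ((B == setT) || tight x B).
Proof.
move=> xP; apply: (big_ind (fun U => (i \in U) && ((U == setT) || tight x U))).
- by rewrite in_setT eqxx.
- move=> U V /andP[iU UT] /andP[iV VT]; rewrite in_setI iU iV /=.
  case/orP: UT => [/eqP-> | tU]; first by rewrite setTI.
  case/orP: VT => [/eqP-> | tV]; first by rewrite setIT tU orbT.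
  by have [_ ->] := tightUI xP tU tV; rewrite orbT.
- by move=> U /andP[tU ->]; rewrite tU orbT.
Qed.

Lemma transfer_in_polymatroid x i j : in_polymatroid x -> (0 < x i)%N -> i != j ->
  (forall U, tight x U -> j \in U -> i \in U) -> in_polymatroid (transfer x i j).
Proof.
move=> xP xi0 ij tight_ji U; have := xsum_transfer U xi0 ij; have := xP U.
case iU: (i \in U); first lia.
case jU: (j \in U); last lia.
have [/tight_ji/(_ jU)|/eqP] := boolP (tight x U); first by rewrite iU.
lia.
Qed.

Lemma xsum_tight_gap x y A B :
  in_polymatroid x -> in_polymatroid y -> tight x A ->
  (B = setT /\ (xsum x setT <= xsum y setT)%N \/ tight y B) ->
  (xsum x (B :\: A) <= xsum y (B :\: A))%N.
Proof.
move=> xP yP /eqP xA [[-> xy] | /eqP yB].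
  have := xsumID x setT A; have := xsumID y setT A; rewrite !setTI.
  by have := yP A; lia.
have := xsumID x (A :|: B) A; have := xsumID y B A.
rewrite setIUl setIid (setIC B A) (setUidPl (subsetIl A B)) setDUl setDv set0U.
by have := f_submod A B; have := xP (A :|: B); have := yP (A :&: B); lia.
Qed.

Lemma exchange_witness x y i :
  in_polymatroid x -> in_polymatroid y -> (xsum x setT <= xsum y setT)%N ->
  (y i < x i)%N ->
  exists j, [/\ j \in min_tight_containing y i, j \notin max_tight_avoiding x i
              & (x j < y j)%N].
Proof.
move=> xP yP xy yxi.
have := max_tight_avoidingP i xP; have := min_tight_containingP i yP.
set A := max_tight_avoiding x i; set B := min_tight_containing y i.
move=> /andP[iB BT] /andP[tA iA].
have gap : (xsum x (B :\: A) <= xsum y (B :\: A))%N.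
  apply: xsum_tight_gap => //.
  by case/orP: BT => [/eqP ->|]; [left | right].
have [/existsP[j /and3P[]]|/existsPn none] :=
  boolP [exists j, [&& j \in B, j \notin A & x j < y j]%N]; first by exists j.
have yx : forall k, k \in B :\: A -> (y k <= x k)%N.
  by move=> k /setDP[kB kA]; have := none k; rewrite kB kA -leqNgt.
have iBA : i \in B :\: A by rewrite inE iA.
by have := xsum_ltn yx iBA yxi; lia.
Qed.

Lemma polymatroid_exchange x y i :
  in_polymatroid x -> in_polymatroid y -> (xsum x setT <= xsum y setT)%N ->
  (y i < x i)%N ->
  exists j, [/\ (x j < y j)%N, in_polymatroid (transfer x i j)
              & in_polymatroid (transfer y j i)].
Proof.
move=> xP yP xy yxi; have [j [jB jA xyj]] := exchange_witness xP yP xy yxi.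
have ij : i != j by apply: contraTneq yxi => ->; rewrite -leqNgt ltnW.
exists j; split=> //.
  apply: transfer_in_polymatroid; rewrite // ?(leq_ltn_trans _ yxi) // => U tU jU.
  by apply: contraNT jA => iU; apply/bigcupP; exists U; rewrite ?tU.
apply: transfer_in_polymatroid; rewrite 1?eq_sym ?(leq_ltn_trans _ xyj) // => V tV iV.
by move/bigcapP: jB; apply; rewrite tV.
Qed.

End PolymatroidExchange.

Section RegularCost.
Variables (R : numDomainType) (C : nat -> nat -> R).
Hypothesis regC : regular C.

Lemma Cminus_le_succx a t : (0 < a)%N -> (Cminus C a t <= Cminus C a.+1 t)%R.
Proof. by move=> a0; have [] := regC t a0; apply: le_trans. Qed.

Lemma regular_Cminus_le a b s u : (0 < a)%N -> (a <= b)%N -> (a + s <= b + u)%N ->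
  (Cminus C a s <= Cminus C b u)%R.
Proof.
move=> + /subnKC <-; move: (b - a)%N => n.
elim: n a s => [|n IH] a s a0 le_su.
  rewrite addn0 in le_su *.
  apply: (homo_leq (r := fun v w => v <= w)%R) => [//|? ? ?|v|]; last lia.
    exact: le_trans.
  by have [] := regC v a0.
have [le_s|lt_s] := leqP s (n + u).
  rewrite addnS; apply: le_trans (Cminus_le_succx _ (ltn_addr n a0)).
  by apply: IH => //; lia.
case: s le_su lt_s => [|s] le_su lt_s; first lia.
by apply: le_trans (regC s a0).2 _; rewrite -addSnnS; apply: IH => //; lia.
Qed.

End RegularCost.

Section NearestOptimal.
Variables (R : realDomainType) (E : finType) (f : {set E} -> nat).
Variables (C : E -> nat -> nat -> R).
Hypothesis f0 : f set0 = 0%N.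
Hypothesis f_submod : forall U V, (f (U :|: V) + f (U :&: V) <= f U + f V)%N.
Hypothesis regC : forall e, regular (C e).
Implicit Types (x y z t : {ffun E -> nat}).

Lemma cost_transfer t x i j : (0 < x i)%N -> i != j ->
  total_cost C t (transfer x i j) =
  (total_cost C t x + Cminus (C j) (x j).+1 (t j) - Cminus (C i) (x i) (t i))%R.
Proof.
move=> xi0 ij.
have split2 (F : E -> R) :
    (\sum_k F k = F i + F j + \sum_(k | (k != i) && (k != j)) F k)%R.
  by rewrite (bigD1 i) //= (bigD1 j) 1?eq_sym //= addrA.
rewrite /total_cost !split2 transfer_src // transfer_dst //.
under eq_bigr => k /andP[ki kj] do rewrite transfer_out //.
by rewrite /Cminus /=; lra.
Qed.

Lemma in_base_transfer d x i j : in_base f d x -> (0 < x i)%N -> i != j ->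
  in_polymatroid f (transfer x i j) -> in_base f d (transfer x i j).
Proof.
move=> [_ xd] xi0 ij xP; split=> //.
by have := xsum_transfer setT xi0 ij; rewrite !in_setT xd; lia.
Qed.

Lemma in_base_bounded d x e : in_base f d x -> (x e <= d)%N.
Proof. by case=> _ <-; rewrite xsumT (bigD1 e) //= leq_addr. Qed.

Lemma in_base_argmin (disp : Order.disp_t) (T : orderType disp)
    (F : {ffun E -> nat} -> T) (P : pred {ffun E -> nat}) d z :
  in_base f d z -> P z ->
  exists y, [/\ in_base f d y, P y &
    forall z, in_base f d z -> P z -> (F y <= F z)%O].
Proof.
move=> zb Pz.
pose vec (g : {ffun E -> 'I_d.+1}) := [ffun e => nat_of_ord (g e)].
have vecK w : in_base f d w -> vec [ffun e => inord (w e)] = w.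
  by move=> wb; apply/ffunP => e; rewrite !ffunE inordK // ltnS (in_base_bounded e wb).
pose Q g := [&& [forall U, xsum (vec g) U <= f U]%N, xsum (vec g) setT == d & P (vec g)].
have QP g : reflect (in_base f d (vec g) /\ P (vec g)) (Q g).
  apply: (iffP and3P) => [[/forallP ? /eqP ? ?]|[[? ->] ?]]; do ?split=> //.
  exact/forallP.
have /QP Qz : in_base f d (vec [ffun e => inord (z e)]) /\ P (vec [ffun e => inord (z e)]).
  by rewrite vecK.
case: (arg_minP (F \o vec) Qz) => g /QP[gb Pg] gmin.
exists (vec g); split=> // w wb Pw.
by rewrite -(vecK _ wb); apply: gmin; apply/QP; rewrite vecK.
Qed.

Lemma optimal_exists t d : (exists z, in_base f d z) -> exists x, optimal f C t d x.
Proof.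
case=> z zb.
have [x [xb _ xmin]] := in_base_argmin (total_cost C t) (P := predT) zb isT.
by exists x; split=> // y yb; apply: xmin.
Qed.

Definition nearest_optimal t d x y :=
  optimal f C t d y /\ forall z, optimal f C t d z -> (l1dist x y <= l1dist x z)%N.

Lemma nearest_optimal_exists t d x : (exists z, in_base f d z) ->
  exists y, nearest_optimal t d x y.
Proof.
move=> /(optimal_exists t) [x1 [x1b x1min]].
have [y [yb ycost ymin]] := in_base_argmin (l1dist x)
  (P := fun z => (total_cost C t z <= total_cost C t x1)%R) x1b (lexx _).
have yopt : optimal f C t d y by split=> // z zb; apply: le_trans ycost (x1min z zb).
by exists y; split=> // z [zb zmin]; apply: ymin => //; apply: zmin.
Qed.

Lemma optimal_transfer_Cminus t d x i j : optimal f C t d x ->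
  (0 < x i)%N -> i != j -> in_polymatroid f (transfer x i j) ->
  (Cminus (C i) (x i) (t i) <= Cminus (C j) (x j).+1 (t j))%R.
Proof.
move=> [xb xmin] xi0 ij xP.
by have := xmin _ (in_base_transfer xb xi0 ij xP); rewrite cost_transfer //; lra.
Qed.

Lemma nearest_transfer_Cminus t d x y i j : nearest_optimal t d x y ->
  (y i < x i)%N -> (x j < y j)%N -> in_polymatroid f (transfer y j i) ->
  (Cminus (C j) (y j) (t j) < Cminus (C i) (y i).+1 (t i))%R.
Proof.
move=> [[yb ymin] ynear] yxi xyj yP; rewrite ltNge; apply/negP => le_ij.
have yj0 : (0 < y j)%N by apply: leq_ltn_trans xyj.
have ji : j != i by apply: contraTneq xyj => ->; rewrite -leqNgt ltnW.
have y'opt : optimal f C t d (transfer y j i).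
  split=> [|z zb]; first exact: in_base_transfer.
  by rewrite cost_transfer //; have := ymin z zb; lra.
by have := ynear _ y'opt; have := l1dist_transfer yxi xyj; lia.
Qed.

Lemma nearest_optimal_exchange t t' d d' x y i j :
  optimal f C t d x -> nearest_optimal t' d' x y ->
  (y i < x i)%N -> (x j < y j)%N ->
  in_polymatroid f (transfer x i j) -> in_polymatroid f (transfer y j i) ->
  (x i + t i <= y i + t' i)%N \/ (y j + t' j <= x j + t j)%N.
Proof.
move=> xopt ynear yxi xyj xP yP.
have ij : i != j by apply: contraTneq yxi => ->; rewrite -leqNgt ltnW.
have x_ij := optimal_transfer_Cminus xopt (leq_ltn_trans (leq0n _) yxi) ij xP.
have y_ji := nearest_transfer_Cminus ynear yxi xyj yP.
case: (leqP (x i + t i) (y i + t' i)) => [|lt_i]; first by left.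
case: (leqP (y j + t' j) (x j + t j)) => [|lt_j]; first by right.
have := regular_Cminus_le (regC i) (ltn0Sn (y i)) yxi lt_i.
have := regular_Cminus_le (regC j) (ltn0Sn (x j)) xyj lt_j.
lra.
Qed.

Lemma nearest_optimal_up t t' d d' x y :
  optimal f C t d x -> nearest_optimal t' d' x y ->
  (d <= d')%N -> (forall k, t k <= t' k)%N ->
  forall k, (x k + t k <= y k + t' k)%N.
Proof.
move=> xopt ynear dd' tt' i; rewrite leqNgt; apply/negP => lt_i.
have yxi : (y i < x i)%N by have := tt' i; lia.
have [[xP xd] _] := xopt; have [[[yP yd] _] _] := ynear.
have [|j [xyj xP' yP']] := polymatroid_exchange f0 f_submod xP yP _ yxi.
  by rewrite xd yd.
by have := tt' j; case: (nearest_optimal_exchange xopt ynear yxi xyj xP' yP'); lia.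
Qed.

Lemma nearest_optimal_down t t' d d' x y :
  optimal f C t d x -> nearest_optimal t' d' x y ->
  (d' <= d)%N -> (forall k, t' k <= t k)%N ->
  forall k, (y k + t' k <= x k + t k)%N.
Proof.
move=> xopt ynear d'd t't j; rewrite leqNgt; apply/negP => lt_j.
have xyj : (x j < y j)%N by have := t't j; lia.
have [[xP xd] _] := xopt; have [[[yP yd] _] _] := ynear.
have [|i [yxi yP' xP']] := polymatroid_exchange f0 f_submod yP xP _ xyj.
  by rewrite xd yd.
by have := t't i; case: (nearest_optimal_exchange xopt ynear yxi xyj xP' yP'); lia.
Qed.

Lemma optimal_stable_up t t' d d' x :
  optimal f C t d x -> (d <= d')%N -> (forall k, t k <= t' k)%N ->
  (exists z, in_base f d' z) ->
  exists y, optimal f C t' d' y /\ (l1dist x y <= 2 * l1dist t t' + (d' - d))%N.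
Proof.
move=> xopt dd' tt' /(nearest_optimal_exists t' x) [y ynear].
exists y; split; first exact: ynear.1.
have := l1dist_le_shift (nearest_optimal_up xopt ynear dd' tt').
by rewrite xopt.1.2 ynear.1.1.2; lia.
Qed.

Lemma optimal_stable_down t t' d d' x :
  optimal f C t d x -> (d' <= d)%N -> (forall k, t' k <= t k)%N ->
  (exists z, in_base f d' z) ->
  exists y, optimal f C t' d' y /\ (l1dist x y <= 2 * l1dist t t' + (d - d'))%N.
Proof.
move=> xopt d'd t't /(nearest_optimal_exists t' x) [y ynear].
exists y; split; first exact: ynear.1.
have := l1dist_le_shift (nearest_optimal_down xopt ynear d'd t't).
by rewrite xopt.1.2 ynear.1.1.2 l1distC (l1distC t'); lia.
Qed.

End NearestOptimal.

Theorem theorem3p5 (R : realType) (E : finType) (f : {set E} -> nat)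
  (C : E -> nat -> nat -> R) (D : nat -> Prop) :
  (0 < #|E|)%N ->
  polymatroid_rank f ->
  (forall e x t, (0 <= C e x t)%R) ->
  (forall e, regular (C e)) ->
  (forall d, D d -> exists x, in_base f d x) ->
  forall (t : {ffun E -> nat}) (d : nat) (x : {ffun E -> nat}),
    D d -> optimal f C t d x ->
    forall (d' : nat) (t' : {ffun E -> nat}), D d' ->
      exists x' : {ffun E -> nat},
        optimal f C t' d' x' /\
        (l1dist x x' <= 2 * l1dist t t' + `|d - d'|)%N.
Proof.
move=> _ [f0 _ f_submod] _ regC baseD t d x Dd xopt d' t' Dd'.
pose tm := [ffun k => minn (t k) (t' k)].
have tm_le_t k : (tm k <= t k)%N by rewrite ffunE geq_minl.
have tm_le_t' k : (tm k <= t' k)%N by rewrite ffunE geq_minr.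
have base_min : exists z, in_base f (minn d d') z.
  by rewrite /minn; case: ltnP => _; apply: baseD.
have [y1 [y1opt x_y1]] := optimal_stable_down f0 f_submod regC (t' := tm) xopt
  (geq_minl d d') tm_le_t base_min.
have [y [yopt y1_y]] := optimal_stable_up f0 f_submod regC (t' := t') y1opt
  (geq_minr d d') tm_le_t' (baseD d' Dd').
exists y; split=> //.
have := l1dist_triangle x y1 y; have := l1dist_minn t t'; rewrite -/tm.
lia.
Qed.
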